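(* Let $N\ge3$, $K\ge2$, $1\le L<N-1$ be integers, $M=N(L+1)^{K-1}$, $d_m=L$ for $m\in[1:N]$ and $d_m=L+1$ for $m\in[N+1:M]$, $C=\left(\sum_{k=0}^{K-1}N^{-k}\right)^{-1}$, and $1\le D\le1/C$. Let $\mathcal{F}_D$ be the set of probability vectors $P$ on $[1:M]$ with $\frac1L\sum_{m=1}^Mp_md_m=D$ and $U$ the uniform distribution on $[1:M]$. Then $\rho^{alt}_\alpha:=\min_{P\in\mathcal{F}_D}D_\alpha(P\|U)$ equals, for $0<\alpha<\infty$, $\alpha\ne1$, $$\rho^{alt}_\alpha=\frac{1}{\alpha-1}\log\left[N\left(\frac{1-L(D-1)}{N}\right)^{\alpha}+\big(N(L+1)^{K-1}-N\big)\left(\frac{L(D-1)}{N(L+1)^{K-1}-N}\right)^{\alpha}\right]+\log N(L+1)^{K-1};$$ for $\alpha=1$, $$\rho^{alt}_1=\{1-L(D-1)\}\log\frac{1-L(D-1)}{N}+L(D-1)\log\frac{L(D-1)}{N(L+1)^{K-1}-N}+\log N(L+1)^{K-1};$$ and for $\alpha=\infty$, $$\rho^{alt}_\infty=\log\frac{1-L(D-1)}{N}+\log N(L+1)^{K-1}.$$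
   Context: Notation: $[i:j]=\{i,\dots,j\}$; natural logarithms with $0\log0=0$. Rényi divergence for probability vectors $P,U$ on $[1:M]$ with $u_m>0$: $D_\alpha(P\|U)=\frac{1}{\alpha-1}\log\sum_m p_m^\alpha u_m^{1-\alpha}$ for $0<\alpha<\infty,\alpha\ne1$; $D_1(P\|U)=\sum_m p_m\log\frac{p_m}{u_m}$; $D_\infty(P\|U)=\log\max_m\frac{p_m}{u_m}$. (Interpretation: optimal leakage–download-cost tradeoff for the paper's alternative PIR scheme with $N$ databases, $K$ messages and message length $L$.) *)

From mathcomp Require Import all_boot all_order all_algebra.
From mathcomp Require Import all_classical all_reals all_analysis.
Unset Printing Implicit Defensive.
Import Order.TTheory GRing.Theory Num.Theory.
Local Open Scope ring_scope.
Local Open Scope classical_set_scope.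

Section Defs.
Context {R : realType}.

(* Index set [1:M] is rendered as 'I_M, with m : 'I_M standing for m+1. *)

Definition renyi {M : nat} (alpha : R) (P U : 'I_M -> R) : R :=
  (alpha - 1)^-1 * ln (\sum_(m < M) P m `^ alpha * U m `^ (1 - alpha)).

(* order 1: KL divergence, with 0 log 0 = 0 (ln 0 = 0 in the library) *)
Definition renyi1 {M : nat} (P U : 'I_M -> R) : R :=
  \sum_(m < M) P m * ln (P m / U m).

Definition renyi_inf {M : nat} (P U : 'I_M -> R) : R :=
  ln (\big[Num.max/0]_(m < M) (P m / U m)).

Definition prob_vec {M : nat} (P : 'I_M -> R) : Prop :=
  (forall m, 0 <= P m) /\ \sum_(m < M) P m = 1.

Definition unif {M : nat} : 'I_M -> R := fun _ => (M%:R)^-1.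

End Defs.

Definition Mval (N K L : nat) : nat := (N * (L.+1) ^ (K.-1))%N.

(* d_m = L for m in [1:N] (indices 0..N-1), L+1 otherwise *)
Definition dcost {R : realType} (N L : nat) {M : nat} (m : 'I_M) : R :=
  if (m < N)%N then L%:R else (L.+1)%:R.

Definition Cconst {R : realType} (N K : nat) : R :=
  (\sum_(k < K) (N%:R ^- k))^-1.

Definition FD {R : realType} (N K L : nat) (D : R) : set ('I_(Mval N K L) -> R) :=
  [set P | prob_vec P /\
           (L%:R)^-1 * \sum_(m < Mval N K L) P m * dcost N L m = D].

Definition is_min {T : Type} {R : realType} (S : set T) (f : T -> R) (v : R) : Prop :=
  (exists2 x, S x & f x = v) /\ (forall x, S x -> v <= f x).

From mathcomp Require Import all_boot all_order all_algebra.
From mathcomp Require Import all_classical all_reals all_analysis.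
From mathcomp Require Import ring lra zify.
Import Order.TTheory GRing.Theory Num.Theory.
Local Open Scope ring_scope.

(* The feasible set F_D is described by two numbers only: writing q = L(D-1),
   a probability vector P lies in F_D iff it puts mass 1 - q on the N answers
   of cost L and mass q on the M - N answers of cost L + 1 (FD_block_masses).
   Among all vectors with prescribed block masses, the one that is uniform on
   each block minimises every Renyi divergence from the uniform distribution:
   by convexity of x |-> x^a (a > 1), concavity (a < 1) and of x ln x (a = 1),
   spreading a fixed mass evenly over a block is optimal, and for a = oo the
   largest coordinate on a block is at least its average.  For a = oo one also
   needs the dear block value q/(M-N) not to exceed the cheap one (1-q)/N,
   which is the budget inequality q M <= M - N derived from D <= 1/C and
   L + 1 <= N (cost_budget). *)

Section ConvexityBounds.
Context {R : realType}.

Lemma sum_const_card (I : finType) (J : {pred I}) (k : R) :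
  \sum_(i in J) k = #|J|%:R * k.
Proof. by rewrite sumr_const mulr_natl. Qed.

(* Scaling inside the logarithm of x ln x; also valid at c = 0 since ln 0 = 0. *)
Lemma mul_ln_scale (c k : R) : 0 <= c -> 0 < k -> c * ln (c * k) = c * ln c + c * ln k.
Proof.
move=> c_ge0 k_gt0; have [->|c_neq0] := eqVneq c 0; first by rewrite !mul0r addr0.
have c_gt0 : 0 < c by rewrite lt_neqAle eq_sym c_neq0.
by rewrite lnM ?posrE // mulrDr.
Qed.

(* Tangent-line bound for the convex map x |-> x^a, a > 1, at the point c:
   x^a >= c^a + a c^(a-1) (x - c), rearranged.  Proved from Young's inequality. *)
Lemma powR_tangent (a x c : R) : 1 < a -> 0 <= x -> 0 <= c ->
  x * (a * c `^ (a - 1)) <= x `^ a + (a - 1) * c `^ a.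
Proof.
move=> a_gt1 x_ge0 c_ge0.
have a_gt0 : 0 < a by lra.
have a1_neq0 : a - 1 != 0 by rewrite subr_eq0 gt_eqF.
have conj_exp : 0 < a / (a - 1) by rewrite divr_gt0 // subr_gt0.
have young := conjugate_powR x_ge0 (powR_ge0 c (a - 1)) a_gt0 conj_exp.
rewrite -powRrM invf_div in young.
have exp_id : (a - 1) * (a / (a - 1)) = a by field.
rewrite exp_id in young.
have inv_sum : a^-1 + (a - 1) / a = 1 by field; rewrite gt_eqF.
have := young inv_sum; rewrite -(ler_pM2l a_gt0).
have -> : a * (x * c `^ (a - 1)) = x * (a * c `^ (a - 1)) by ring.
by have -> : a * (x `^ a / a + c `^ a * ((a - 1) / a)) = x `^ a + (a - 1) * c `^ a
  by field; rewrite gt_eqF.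
Qed.

(* Weighted AM-GM inequality x^a c^(1-a) <= a x + (1-a) c for 0 < a < 1,
   again an instance of Young's inequality with exponents 1/a and 1/(1-a). *)
Lemma powR_am_gm (a x c : R) : 0 < a -> a < 1 -> 0 <= x -> 0 <= c ->
  x `^ a * c `^ (1 - a) <= a * x + (1 - a) * c.
Proof.
move=> a_gt0 a_lt1 x_ge0 c_ge0.
have a1_gt0 : 0 < 1 - a by lra.
have := conjugate_powR (powR_ge0 x a) (powR_ge0 c (1 - a))
  (_ : 0 < a^-1) (_ : 0 < (1 - a)^-1).
rewrite ?invr_gt0 // !invrK -!powRrM !mulfV ?gt_eqF // !powRr1 //.
have -> : a + (1 - a) = 1 by ring.
by move=> /(_ a_gt0 a1_gt0 erefl) /le_trans; apply; lra.
Qed.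

(* Gibbs-type bound x ln(x/u) >= x ln(c/u) + (x - c), i.e. ln t <= t - 1
   applied to t = c/x; it also holds at x = 0 thanks to the convention ln 0 = 0. *)
Lemma xlnx_tangent (x c u : R) : 0 <= x -> 0 < c -> 0 < u ->
  (x - c) + x * ln (c / u) <= x * ln (x / u).
Proof.
move=> x_ge0 c_gt0 u_gt0.
have [->|x_neq0] := eqVneq x 0; first by rewrite !mul0r sub0r addr0 oppr_le0 ltW.
have x_gt0 : 0 < x by rewrite lt_neqAle eq_sym x_neq0.
have ln_le : ln (c / x) <= c / x - 1.
  have := @le_ln1Dx R (c / x - 1); rewrite (addrC 1) subrK; apply.
  have : 0 < c / x by rewrite divr_gt0.
  lra.
rewrite ln_div ?posrE // in ln_le.
rewrite !ln_div ?posrE //.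
have : x * (ln c - ln x) <= x * (c / x - 1) by rewrite ler_pM2l.
have -> : x * (c / x - 1) = c - x by field; rewrite gt_eqF.
lra.
Qed.

(* Summing the three
   pointwise bounds above shows that the constant family minimises the power
   sum for a > 1, maximises it for a < 1, and minimises the entropy-like sum.  *)
Section ConstantFamily.
Variables (I : finType) (J : {pred I}) (x : I -> R) (c : R).
Hypothesis x_ge0 : forall i, 0 <= x i.
Hypothesis c_ge0 : 0 <= c.
Hypothesis mass : \sum_(i in J) x i = #|J|%:R * c.

Lemma mass0_eq0 : c = 0 -> forall i, i \in J -> x i = 0.
Proof.
move=> c0; move: mass; rewrite c0 mulr0 => /psumr_eq0P; apply => i _; exact: x_ge0.
Qed.

Lemma sum_powR_ge_const (a : R) : 1 < a ->
  #|J|%:R * c `^ a <= \sum_(i in J) x i `^ a.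
Proof.
move=> a_gt1.
have tangent : \sum_(i in J) x i * (a * c `^ (a - 1)) <=
               \sum_(i in J) (x i `^ a + (a - 1) * c `^ a).
  by apply: ler_sum => i _; apply: powR_tangent.
rewrite big_split /= -mulr_suml mass !sum_const_card in tangent.
have a_gt0 : 0 < a by lra.
have lhs : #|J|%:R * c * (a * c `^ (a - 1)) = a * (#|J|%:R * c `^ a).
  by rewrite -(mulr_powRB1 c_ge0 a_gt0); ring.
rewrite lhs in tangent; lra.
Qed.

Lemma sum_powR_le_const (a : R) : 0 < a -> a < 1 ->
  \sum_(i in J) x i `^ a <= #|J|%:R * c `^ a.
Proof.
move=> a_gt0 a_lt1.
have [c0|c_neq0] := eqVneq c 0.
  rewrite big1 ?mulr_ge0 ?powR_ge0 // => i iJ.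
  by rewrite (mass0_eq0 c0 _ iJ) powR0 // gt_eqF.
have c_gt0 : 0 < c by rewrite lt_neqAle eq_sym c_neq0.
have am_gm : \sum_(i in J) x i `^ a * c `^ (1 - a) <=
             \sum_(i in J) (a * x i + (1 - a) * c).
  by apply: ler_sum => i _; apply: powR_am_gm.
rewrite big_split /= -mulr_suml -mulr_sumr mass !sum_const_card in am_gm.
have c_split : c = c `^ a * c `^ (1 - a).
  rewrite -powRD; last by rewrite c_neq0 implybT.
  by rewrite addrC subrK powRr1.
rewrite -(ler_pM2r (powR_gt0 (1 - a) c_gt0)) -mulrA -c_split.
by apply: le_trans am_gm _; lra.
Qed.

Lemma sum_xlnx_ge_const (u : R) : 0 < u ->
  #|J|%:R * (c * ln (c / u)) <= \sum_(i in J) x i * ln (x i / u).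
Proof.
move=> u_gt0.
have [c0|c_neq0] := eqVneq c 0.
  rewrite c0 mul0r mulr0 big1 // => i iJ.
  by rewrite (mass0_eq0 c0 _ iJ) mul0r.
have c_gt0 : 0 < c by rewrite lt_neqAle eq_sym c_neq0.
have tangent : \sum_(i in J) ((x i - c) + x i * ln (c / u)) <=
                \sum_(i in J) x i * ln (x i / u).
  by apply: ler_sum => i _; apply: xlnx_tangent.
apply: le_trans tangent.
by rewrite big_split /= sumrB -mulr_suml mass sum_const_card subrr add0r mulrA.
Qed.

End ConstantFamily.
End ConvexityBounds.

Section DivergenceFromUniform.
Context {R : realType} {M : nat}.
Hypothesis M_gt0 : (0 < M)%N.

Lemma renyi_unif (a : R) (P : 'I_M -> R) : a != 1 -> 0 < \sum_m P m `^ a ->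
  renyi a P unif = (a - 1)^-1 * ln (\sum_m P m `^ a) + ln M%:R.
Proof.
move=> a_neq1 sum_gt0.
have M_pos : (0 : R) < M%:R by rewrite ltr0n.
rewrite /renyi /unif -mulr_suml lnM ?posrE ?powR_gt0 ?invr_gt0 //.
rewrite ln_powR lnV ?posrE //.
have a1_neq0 : a - 1 != 0 by rewrite subr_eq0.
by field.
Qed.

Lemma sum_powR_gt0 (a : R) (P : 'I_M -> R) : (forall m, 0 <= P m) ->
  0 < \sum_m P m -> 0 < \sum_m P m `^ a.
Proof.
move=> P_ge0 sum_gt0.
rewrite lt_neqAle sumr_ge0 ?andbT => [|m _]; last exact: powR_ge0.
apply/eqP => /esym sum_a0.
have P_a0 m : P m `^ a = 0.
  by move/psumr_eq0P: sum_a0; apply=> // i _; apply: powR_ge0.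
suff P0 : \sum_m P m = 0 by rewrite P0 ltxx in sum_gt0.
by apply: big1 => m _; apply: (@powR_eq0_eq0 _ _ a).
Qed.

End DivergenceFromUniform.

Section BlockUniform.
Context {R : realType} {M : nat} (A : {pred 'I_M}) (sA sB : R).
Hypothesis A_gt0 : (0 < #|A|)%N.
Hypothesis Ac_gt0 : (0 < #|[predC A]|)%N.
Hypothesis sA_gt0 : 0 < sA.
Hypothesis sB_ge0 : 0 <= sB.
Hypothesis total_mass : sA + sB = 1.

Local Notation nA := (#|A|%:R : R).
Local Notation nB := (#|[predC A]|%:R : R).
Local Notation cA := (sA / nA).
Local Notation cB := (sB / nB).

Definition block_masses (P : 'I_M -> R) : Prop :=
  [/\ forall m, 0 <= P m, \sum_(m in A) P m = sA & \sum_(m in [predC A]) P m = sB].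

Definition block_unif : 'I_M -> R := fun m => if m \in A then cA else cB.

Let nA_gt0 : 0 < nA. Proof. by rewrite ltr0n. Qed.
Let nB_gt0 : 0 < nB. Proof. by rewrite ltr0n. Qed.
Let cA_gt0 : 0 < cA. Proof. exact: divr_gt0. Qed.
Let cB_ge0 : 0 <= cB. Proof. by rewrite divr_ge0 // ltW. Qed.
Let nA_cA : nA * cA = sA. Proof. by rewrite mulrC divfK // gt_eqF. Qed.
Let nB_cB : nB * cB = sB. Proof. by rewrite mulrC divfK // gt_eqF. Qed.
Let M_gt0 : (0 < M)%N.
Proof. by apply: leq_trans A_gt0 _; rewrite -[X in (_ <= X)%N]card_ord max_card. Qed.

Lemma sum_blocks (F : 'I_M -> R) :
  \sum_m F m = \sum_(m in A) F m + \sum_(m in [predC A]) F m.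
Proof. by rewrite (bigID [in A]). Qed.

Lemma sum_block_unif (f : R -> R) :
  \sum_m f (block_unif m) = nA * f cA + nB * f cB.
Proof.
rewrite sum_blocks (eq_bigr (fun=> f cA)) => [|m mA]; last by rewrite /block_unif mA.
rewrite [X in _ + X](eq_bigr (fun=> f cB)) => [|m]; last first.
  by rewrite inE /block_unif => /negbTE ->.
by rewrite !sum_const_card.
Qed.

Lemma block_unif_masses : block_masses block_unif.
Proof.
split=> [m | |]; first by rewrite /block_unif; case: ifP => _; [exact: ltW|].
- rewrite (eq_bigr (fun=> cA)) => [|m mA]; last by rewrite /block_unif mA.
  by rewrite sum_const_card nA_cA.
- rewrite (eq_bigr (fun=> cB)) => [|m]; last by rewrite inE /block_unif => /negbTE ->.
  by rewrite sum_const_card nB_cB.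
Qed.

Lemma block_masses_prob (P : 'I_M -> R) : block_masses P -> prob_vec P.
Proof. by case=> P_ge0 massA massB; split=> //; rewrite sum_blocks massA massB. Qed.

Lemma renyi_block_value (a : R) : a != 1 ->
  renyi a block_unif unif = (a - 1)^-1 * ln (nA * cA `^ a + nB * cB `^ a) + ln M%:R.
Proof.
move=> a_neq1; have [block_ge0 massA massB] := block_unif_masses.
rewrite renyi_unif ?(sum_block_unif (fun x => x `^ a)) // -(sum_block_unif (fun x => x `^ a)).
by apply: sum_powR_gt0 => //; rewrite sum_blocks massA massB total_mass.
Qed.

Lemma renyi1_block_value : renyi1 block_unif unif = sA * ln cA + sB * ln cB + ln M%:R.
Proof.
have M_pos : (0 : R) < M%:R by rewrite ltr0n.
rewrite /renyi1 /unif (sum_block_unif (fun x => x * ln (x / M%:R^-1))) invrK.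
rewrite (mul_ln_scale _ _ (ltW cA_gt0) M_pos) (mul_ln_scale _ _ cB_ge0 M_pos).
have -> : sB = 1 - sA by rewrite -total_mass; ring.
by field; rewrite !gt_eqF.
Qed.

(* For the order infinity the block values must be ordered: the largest
   likelihood ratio of block_unif is then attained on A. *)
Hypothesis cB_le_cA : cB <= cA.

Lemma renyi_inf_block_value : renyi_inf block_unif unif = ln cA + ln M%:R.
Proof.
have M_pos : (0 : R) < M%:R by rewrite ltr0n.
rewrite /renyi_inf /unif -lnM ?posrE //; congr ln; apply/le_anti/andP; split.
- apply: bigmax_le => [|m _]; first by rewrite mulr_ge0 // ltW.
  by rewrite invrK ler_pM2r // /block_unif; case: ifP.
- case/card_gt0P: A_gt0 => m0 m0A.
  by apply: le_trans (le_bigmax _ _ m0); rewrite /block_unif m0A invrK.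
Qed.

Section Comparison.
Variable P : 'I_M -> R.
Hypothesis P_masses : block_masses P.

Let P_ge0 : forall m, 0 <= P m. Proof. by case: P_masses. Qed.
Let massA : \sum_(m in A) P m = nA * cA. Proof. by case: P_masses => _ -> _. Qed.
Let massB : \sum_(m in [predC A]) P m = nB * cB. Proof. by case: P_masses => _ _ ->. Qed.
Let sum_P_gt0 : 0 < \sum_m P m.
Proof. by rewrite sum_blocks massA massB nA_cA nB_cB total_mass. Qed.

Let sum_powR_P_gt0 (a : R) : 0 < \sum_m P m `^ a.
Proof. exact: sum_powR_gt0. Qed.

Lemma sum_powR_block_ge (a : R) : 1 < a ->
  \sum_m block_unif m `^ a <= \sum_m P m `^ a.
Proof.
move=> a_gt1; rewrite (sum_block_unif (fun x => x `^ a)) sum_blocks.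
by apply: lerD; apply: sum_powR_ge_const => //; exact: ltW.
Qed.

Lemma sum_powR_block_le (a : R) : 0 < a -> a < 1 ->
  \sum_m P m `^ a <= \sum_m block_unif m `^ a.
Proof.
move=> a_gt0 a_lt1; rewrite (sum_block_unif (fun x => x `^ a)) sum_blocks.
by apply: lerD; apply: sum_powR_le_const => //; exact: ltW.
Qed.

Lemma renyi_block_le (a : R) : 0 < a -> a != 1 ->
  renyi a block_unif unif <= renyi a P unif.
Proof.
move=> a_gt0 a_neq1.
have [block_ge0 massA' massB'] := block_unif_masses.
have block_pos : 0 < \sum_m block_unif m `^ a.
  by apply: sum_powR_gt0 => //; rewrite sum_blocks massA' massB' total_mass.
rewrite !renyi_unif // lerD2r.
have [a_lt1|a_gt1] : a < 1 \/ 1 < a by move: a_neq1; rewrite neq_lt => /orP.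
- apply: ler_wnM2l; first by rewrite invr_le0 subr_le0 ltW.
  by rewrite ler_ln ?posrE //; exact: sum_powR_block_le.
- apply: ler_wpM2l; first by rewrite invr_ge0 subr_ge0 ltW.
  by rewrite ler_ln ?posrE //; exact: sum_powR_block_ge.
Qed.

Lemma renyi1_block_le : renyi1 block_unif unif <= renyi1 P unif.
Proof.
have u_gt0 : (0 : R) < M%:R^-1 by rewrite invr_gt0 ltr0n.
rewrite /renyi1 /unif (sum_block_unif (fun x => x * ln (x / M%:R^-1))) sum_blocks.
by apply: lerD; apply: sum_xlnx_ge_const => //; exact: ltW.
Qed.

(* Some coordinate of P on A is at least the average cA, so the largest
   likelihood ratio of P is at least that of block_unif. *)
Lemma renyi_inf_block_le : renyi_inf block_unif unif <= renyi_inf P unif.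
Proof.
rewrite renyi_inf_block_value.
have M_pos : (0 : R) < M%:R by rewrite ltr0n.
set top := \big[Num.max/0]_(m < M) (P m / unif m).
have mean_le_top : nA * (cA * M%:R) <= nA * top.
  rewrite mulrA -massA mulr_suml -sum_const_card; apply: ler_sum => m _.
  by rewrite -[M%:R]invrK; exact: (le_bigmax _ (fun m => P m / unif m)).
have top_ge : cA * M%:R <= top by rewrite -(ler_pM2l nA_gt0).
have cAM_gt0 : 0 < cA * M%:R by rewrite mulr_gt0.
rewrite /renyi_inf -/top -lnM ?posrE // ler_ln ?posrE //.
exact: lt_le_trans cAM_gt0 top_ge.
Qed.

End Comparison.

End BlockUniform.

(* Since L + 1 <= N, the bound D <= 1/C forces
   L (D - 1) <= L sum_{k=1}^{K-1} (L+1)^{-k} = 1 - (L+1)^{-(K-1)}, which after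
   multiplication by M = N (L+1)^{K-1} reads L (D - 1) M <= M - N. *)
Lemma cost_budget {R : realType} (N K L : nat) (D : R) :
  (L.+1 <= N)%N -> (0 < K)%N -> D <= (Cconst N K)^-1 ->
  L%:R * (D - 1) * (Mval N K L)%:R <= (Mval N K L)%:R - N%:R.
Proof.
case: K => // n LN _ D_le.
have x_gt0 : (0 : R) < (L.+1)%:R by rewrite ltr0n.
set y : R := (L.+1)%:R^-1.
have Ly : L%:R * y = 1 - y by rewrite /y -natr1; field; rewrite gt_eqF // natr1.
have geom : L%:R * \sum_(k < n) y ^+ k.+1 = 1 - y ^+ n.
  under eq_bigr do rewrite exprS.
  by rewrite -mulr_sumr mulrA Ly -[1 - y]opprB mulNr -subrX1 opprB.
have D1_le : D - 1 <= \sum_(k < n) y ^+ k.+1.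
  move: D_le; rewrite /Cconst invrK big_ord_recl expr0 invr1 -lerBlDl => /le_trans.
  apply; apply: ler_sum => k _; rewrite lift0 -exprVn.
  apply: lerXn2r; rewrite ?nnegrE ?invr_ge0 ?ler0n //.
  by rewrite lef_pV2 ?posrE ?ltr0n ?ler_nat //; lia.
have q_le : L%:R * (D - 1) <= 1 - y ^+ n by rewrite -geom ler_wpM2l.
rewrite /Mval natrM natrX.
apply: le_trans (ler_wpM2r _ q_le) _; first by rewrite mulr_ge0 // exprn_ge0 // ltW.
by rewrite mulrBl mul1r mulrCA -exprMn mulVf ?gt_eqF // expr1n mulr1.
Qed.

Lemma is_min_witness {T : Type} {R : realType} (S : set T) (f : T -> R) (x : T) :
  S x -> (forall y, S y -> f x <= f y) -> is_min S f (f x).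
Proof. by move=> Sx x_min; split=> //; exists x. Qed.

Section AlternativeScheme.
Context {R : realType} (N K L : nat) (D : R).
Hypothesis L_gt0 : (0 < L)%N.
Hypothesis LN : (L.+1 <= N)%N.
Hypothesis K_gt1 : (1 < K)%N.
Hypothesis D_ge1 : 1 <= D.
Hypothesis D_le : D <= (Cconst N K)^-1.

Local Notation M := (Mval N K L).
Local Notation q := (L%:R * (D - 1) : R).
Local Notation cheap := [pred m : 'I_M | (m < N)%N].

Lemma N_lt_M : (N < M)%N.
Proof.
case: K K_gt1 => [|[|n]] // _; rewrite /Mval /= expnS.
by have := expn_gt0 L.+1 n; set Z := (L.+1 ^ n)%N; nia.
Qed.

Lemma card_cheap : #|cheap| = N.
Proof.
rewrite -sum1_card -(big_ord_widen _ (fun=> 1%N) (ltnW N_lt_M)).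
by rewrite sum1_card card_ord.
Qed.

Lemma card_dear : #|[predC cheap]| = (M - N)%N.
Proof. by have := cardC cheap; rewrite card_ord card_cheap => /(congr1 (subn^~ N)); rewrite addKn. Qed.

Lemma cost_sum (P : 'I_M -> R) :
  \sum_m P m * dcost N L m = L%:R * \sum_m P m + \sum_(m in [predC cheap]) P m.
Proof.
rewrite (sum_blocks cheap (fun m => P m * dcost N L m)) (sum_blocks cheap P).
rewrite mulrDr -addrA; congr (_ + _).
  by rewrite mulr_sumr; apply: eq_bigr => m m_cheap; rewrite /dcost ifT // mulrC.
rewrite mulr_sumr -big_split; apply: eq_bigr => m m_dear.
rewrite /dcost ifF; last exact: negbTE m_dear.
by rewrite -natr1 mulrDr mulr1 mulrC.
Qed.

Lemma FD_block_masses (P : 'I_M -> R) :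
  FD N K L D P <-> block_masses cheap (1 - q) q P.
Proof.
have L_pos : (0 : R) < L%:R by rewrite ltr0n.
rewrite /FD /= cost_sum; split.
- case=> [[P_ge0 P_sum]]; rewrite P_sum mulr1 => cost.
  have dear : \sum_(m in [predC cheap]) P m = q.
    by rewrite -cost; field; rewrite gt_eqF.
  split=> //; apply/eqP.
  by rewrite eq_sym subr_eq -dear -(sum_blocks cheap P) P_sum.
- move=> masses; have [P_ge0 P_sum] := block_masses_prob cheap _ _ (subrK q 1) _ masses.
  case: masses => _ _ dear; split=> //.
  by rewrite P_sum dear mulr1; field; rewrite gt_eqF.
Qed.

Let cheap_gt0 : (0 < #|cheap|)%N. Proof. by rewrite card_cheap; lia. Qed.
Let dear_gt0 : (0 < #|[predC cheap]|)%N.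
Proof. by rewrite card_dear subn_gt0 N_lt_M. Qed.
Let cheap_card : #|cheap|%:R = N%:R :> R. Proof. by rewrite card_cheap. Qed.
Let dear_card : #|[predC cheap]|%:R = M%:R - N%:R :> R.
Proof. by rewrite card_dear natrB // ltnW // N_lt_M. Qed.
Let q_ge0 : 0 <= q. Proof. by rewrite mulr_ge0 ?ler0n // subr_ge0. Qed.
Let total : 1 - q + q = 1. Proof. exact: subrK. Qed.

Let budget : q * M%:R <= M%:R - N%:R.
Proof. by apply: cost_budget => //; lia. Qed.

Let cheap_mass_gt0 : 0 < 1 - q.
Proof.
have N_pos : (0 : R) < N%:R by rewrite ltr0n; lia.
have M_pos : (0 : R) < M%:R by rewrite ltr0n; apply: leq_ltn_trans N_lt_M.
rewrite subr_gt0 -(ltr_pM2r M_pos) mul1r; have := budget; lra.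
Qed.

Let dear_le_cheap : q / #|[predC cheap]|%:R <= (1 - q) / #|cheap|%:R.
Proof.
have N_pos : (0 : R) < N%:R by rewrite ltr0n; lia.
have MN_pos : (0 : R) < M%:R - N%:R by rewrite -dear_card ltr0n.
rewrite cheap_card dear_card ler_pdivrMr // mulrAC ler_pdivlMr //; have := budget; lra.
Qed.

Local Notation P0 := (block_unif cheap (1 - q) q).

Let P0_FD : FD N K L D P0.
Proof. by apply/FD_block_masses; exact: block_unif_masses. Qed.

Lemma alt_renyi_min (a : R) : 0 < a -> a != 1 ->
  is_min (FD N K L D) (fun P => renyi a P unif)
    ((a - 1)^-1 * ln (N%:R * ((1 - q) / N%:R) `^ a
                      + (M%:R - N%:R) * (q / (M%:R - N%:R)) `^ a) + ln M%:R).
Proof.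
move=> a_gt0 a_neq1; rewrite -dear_card -cheap_card -renyi_block_value //.
apply: is_min_witness => // P /FD_block_masses masses; exact: renyi_block_le.
Qed.

Lemma alt_renyi1_min :
  is_min (FD N K L D) (fun P => renyi1 P unif)
    ((1 - q) * ln ((1 - q) / N%:R) + q * ln (q / (M%:R - N%:R)) + ln M%:R).
Proof.
rewrite -dear_card -cheap_card -renyi1_block_value //.
apply: is_min_witness => // P /FD_block_masses masses; exact: renyi1_block_le.
Qed.

Lemma alt_renyi_inf_min :
  is_min (FD N K L D) (fun P => renyi_inf P unif) (ln ((1 - q) / N%:R) + ln M%:R).
Proof.
rewrite -cheap_card -(renyi_inf_block_value cheap (1 - q) q) //.
apply: is_min_witness => // P /FD_block_masses masses; exact: renyi_inf_block_le.
Qed.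

End AlternativeScheme.

Theorem theorem2 (R : realType) (N K L : nat) (D : R) :
  (3 <= N)%N -> (2 <= K)%N -> (1 <= L)%N -> (L < N - 1)%N ->
  1 <= D -> D <= (Cconst N K)^-1 ->
  let M := Mval N K L in
  let q : R := L%:R * (D - 1) in
  (forall alpha : R, 0 < alpha -> alpha != 1 ->
     is_min (FD N K L D) (fun P => renyi alpha P unif)
       ((alpha - 1)^-1 *
          ln (N%:R * ((1 - q) / N%:R) `^ alpha
              + (M%:R - N%:R) * (q / (M%:R - N%:R)) `^ alpha)
        + ln M%:R)) /\
  is_min (FD N K L D) (fun P => renyi1 P unif)
    ((1 - q) * ln ((1 - q) / N%:R) + q * ln (q / (M%:R - N%:R)) + ln M%:R) /\
  is_min (FD N K L D) (fun P => renyi_inf P unif)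
    (ln ((1 - q) / N%:R) + ln M%:R).
Proof.
move=> _ K_gt1 L_gt0 L_lt D_ge1 D_le M q.
have LN : (L.+1 <= N)%N by lia.
split; first exact: alt_renyi_min.
by split; [exact: alt_renyi1_min | exact: alt_renyi_inf_min].
Qed.
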